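(* Let $n\in\mathbb{N}$, let $G=\mathbb{Z}_3^n$ be the elementary abelian $3$-group of rank $n$ (written multiplicatively), let $S$ be a sum-free set in $G$, and let $x\in S$. Then: (i) any two of the sets $S$, $x^{-1}S$, $xS$ are disjoint; (ii) any two of the sets $S$, $SS^{-1}$, $S^{-1}$ are disjoint. Moreover, if $S$ is a maximal sum-free set in $G$, then: (iii) $S\cup x^{-1}S\cup xS=G$ and $|S|=\frac{|G|}{3}$; (iv) $S\cup SS^{-1}\cup S^{-1}=G$.
   Context: A non-empty subset $S$ of a group $G$ is called sum-free if for all $s_1,s_2\in S$ (including the case $s_1=s_2$) one has $s_1s_2\notin S$. A maximal sum-free set in a finite group $G$ means a sum-free set of largest possible cardinality among all sum-free sets in $G$. Notation: $xS=\{xs: s\in S\}$, $x^{-1}S=\{x^{-1}s : s\in S\}$, $S^{-1}=\{s^{-1}: s\in S\}$, $SS^{-1}=\{st^{-1}: s,t\in S\}$. *)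

From mathcomp Require Import all_boot all_fingroup all_solvable.
Set Implicit Arguments. Unset Strict Implicit. Unset Printing Implicit Defensive.
Local Open Scope group_scope.

Definition sum_free (gT : finGroupType) (G S : {set gT}) : Prop :=
  [/\ S != set0, S \subset G &
      forall s1 s2, s1 \in S -> s2 \in S -> s1 * s2 \notin S].

Definition max_sum_free (gT : finGroupType) (G S : {set gT}) : Prop :=
  sum_free G S /\ forall T : {set gT}, sum_free G T -> #|T| <= #|S|.

From mathcomp Require Import all_boot all_fingroup all_solvable.

Set Implicit Arguments.
Unset Strict Implicit.
Unset Printing Implicit Defensive.

Local Open Scope group_scope.

(* In exponent 3 we have s s = s^-1, which makes S, x^-1 S, x S (for x in S)
   pairwise disjoint, and likewise S, S S^-1, S^-1; in particular
   3|S| <= |G|.  Conversely, a coset yM of a proper subgroup M is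
   sum-free because y^-1 (y m)(y m') = m y m' lies outside M, and a nontrivial
   3-group has a subgroup of index 3.  So a largest sum-free set has |G|/3
   elements, and three pairwise disjoint sets of at least that size fill G. *)

Lemma card_disjoint_setU3 (T : finType) (A B C : {set T}) :
  [disjoint A & B] -> [disjoint A & C] -> [disjoint B & C] ->
  #|A :|: B :|: C| = (#|A| + #|B| + #|C|)%N.
Proof.
move=> dAB dAC dBC.
have cardsU_disjoint (X Y : {set T}) :
    [disjoint X & Y] -> #|X :|: Y| = (#|X| + #|Y|)%N.
  by move=> dXY; apply/eqP; rewrite (leq_card_setU X Y).2.
have dABC : [disjoint A :|: B & C].
  by rewrite -setI_eq0 setIUl setU_eq0 !setI_eq0 dAC.
by rewrite !cardsU_disjoint.
Qed.

Lemma disjoint_setU3_cover (T : finType) (G A B C : {set T}) :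
  A :|: B :|: C \subset G ->
  [disjoint A & B] -> [disjoint A & C] -> [disjoint B & C] ->
  (#|G| <= #|A| + #|B| + #|C|)%N -> A :|: B :|: C = G.
Proof.
move=> sABC_G dAB dAC dBC leG.
by apply/eqP; rewrite eqEcard sABC_G card_disjoint_setU3.
Qed.

Section SumFree.

Variables (gT : finGroupType) (G : {group gT}) (S : {set gT}).
Hypothesis sfS : sum_free G S.

Let sSG : S \subset G. Proof. by case: sfS. Qed.

Let mul_notin s1 s2 : s1 \in S -> s2 \in S -> s1 * s2 \notin S.
Proof. by case: sfS => _ _; apply. Qed.

Lemma sum_free_ntrivg : G :!=: 1.
Proof.
have [x xS] : exists x, x \in S by case: sfS => /set0Pn.
apply/trivgPn; exists x; first exact: (subsetP sSG).
by apply/eqP => x1; case/negP: (mul_notin xS xS); rewrite {1}x1 mul1g.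
Qed.

Lemma sum_free_translates_sub x :
  x \in S -> S :|: x^-1 *: S :|: x *: S \subset G.
Proof.
move=> xS; have xG := subsetP sSG x xS.
by rewrite !subUset -!sub_lcosetV invgK !lcoset_id ?groupV ?sSG.
Qed.

Lemma sum_free_disjoint_lcosetV x : x \in S -> [disjoint S & x^-1 *: S].
Proof.
move=> xS; rewrite disjoint_subset; apply/subsetP => z zS.
rewrite !inE mem_lcoset invgK; apply/negP => xzS.
by case/negP: (mul_notin xS zS).
Qed.

Lemma sum_free_disjoint_lcoset x : x \in S -> [disjoint S & x *: S].
Proof.
move=> xS; rewrite disjoint_subset; apply/subsetP => z zS.
rewrite !inE mem_lcoset; apply/negP => xVzS.
by case/negP: (mul_notin xS xVzS); rewrite mulKVg.
Qed.

Lemma sum_free_disjoint_divs : [disjoint S & S * S^-1].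
Proof.
rewrite disjoint_sym disjoint_subset; apply/subsetP => z /mulsgP[a b aS + ->].
rewrite mem_invg !inE => bVS; apply/negP => abS.
by case/negP: (mul_notin abS bVS); rewrite mulgK.
Qed.

Lemma sum_free_disjoint_divs_invs : [disjoint S * S^-1 & S^-1].
Proof.
rewrite disjoint_subset; apply/subsetP => z /mulsgP[a b aS + ->].
rewrite mem_invg !inE invMg => bVS; apply/negP => bab_S.
by case/negP: (mul_notin bab_S aS); rewrite -mulgA mulVg mulg1.
Qed.

Lemma card_sum_free_divs x : x \in S -> #|S| <= #|S * S^-1|.
Proof.
move=> xS; rewrite -(card_rcoset S x^-1) subset_leq_card // mulgS //.
by rewrite sub1set mem_invg invgK.
Qed.

Hypothesis expG3 : exponent G %| 3.

Let sqr_invg g : g \in G -> g * g = g^-1.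
Proof.
move=> gG; apply: (mulgI g); rewrite mulgV.
by rewrite -(exponentP expG3 g gG) !expgS expg0 mulg1.
Qed.

Lemma sum_free_disjoint_lcosetV_lcoset x :
  x \in S -> [disjoint x^-1 *: S & x *: S].
Proof.
move=> xS; rewrite disjoint_subset; apply/subsetP => z.
rewrite !inE !mem_lcoset invgK => xzS; apply/negP => xVzS.
case/negP: (mul_notin xS xzS).
by rewrite mulgA sqr_invg ?(subsetP sSG).
Qed.

Lemma sum_free_disjoint_invs : [disjoint S & S^-1].
Proof.
rewrite disjoint_subset; apply/subsetP => z zS.
rewrite !inE; apply/negP => zVS.
by case/negP: (mul_notin zS zS); rewrite sqr_invg ?(subsetP sSG).
Qed.

Lemma card_sum_free_translates x :
  x \in S -> #|S :|: x^-1 *: S :|: x *: S| = (3 * #|S|)%N.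
Proof.
move=> xS; rewrite card_disjoint_setU3.
- by rewrite !card_lcoset -addnA addnn -mul2n -mulSn.
- exact: sum_free_disjoint_lcosetV.
- exact: sum_free_disjoint_lcoset.
- exact: sum_free_disjoint_lcosetV_lcoset.
Qed.

Lemma card_sum_free_exponent3 : (3 * #|S| <= #|G|)%N.
Proof.
have [x xS] : exists x, x \in S by case: sfS => /set0Pn.
rewrite -(card_sum_free_translates xS).
by rewrite subset_leq_card ?sum_free_translates_sub.
Qed.

Lemma sum_free_translates_cover x :
  x \in S -> (#|G| <= 3 * #|S|)%N -> S :|: x^-1 *: S :|: x *: S = G.
Proof.
move=> xS leG; apply/eqP.
by rewrite eqEcard sum_free_translates_sub // card_sum_free_translates.
Qed.

Lemma sum_free_divs_invs_cover :
  (#|G| <= 3 * #|S|)%N -> S :|: S * S^-1 :|: S^-1 = G.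
Proof.
have [x xS] : exists x, x \in S by case: sfS => /set0Pn.
have sSVG : S^-1 \subset G by rewrite -invGid invSg.
move=> leG; apply: disjoint_setU3_cover.
- by rewrite !subUset sSG mul_subG.
- exact: sum_free_disjoint_divs.
- exact: sum_free_disjoint_invs.
- exact: sum_free_disjoint_divs_invs.
rewrite (leq_trans leG) // card_invg mulSn mul2n -addnn addnA.
by rewrite leq_add2r leq_add2l (card_sum_free_divs xS).
Qed.

End SumFree.

Lemma sum_free_lcoset (gT : finGroupType) (G M : {group gT}) y :
  M \subset G -> y \in G :\: M -> sum_free G (y *: M).
Proof.
move=> sMG /setDP[yG yM]; split.
- by apply/set0Pn; exists y; rewrite mem_lcoset mulVg.
- by rewrite -sub_lcosetV lcoset_id ?groupV.
move=> s1 s2; rewrite !mem_lcoset => yVs1M yVs2M.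
have -> : y^-1 * (s1 * s2) = y^-1 * s1 * y * (y^-1 * s2).
  by rewrite -!mulgA mulKVg.
by rewrite groupMr // groupMl.
Qed.

Lemma exists_sum_free_pgroup (gT : finGroupType) (p : nat) (G : {group gT}) :
  p.-group G -> G :!=: 1 ->
  exists2 T : {set gT}, sum_free G T & (p * #|T|)%N = #|G|.
Proof.
move=> pG ntG.
have [M maxM _] : {M : {group gT} | maximal M G & [1 gT] \subset M}.
  by apply: maxgroup_exists; rewrite proper1G.
have /properP[sMG [y yG yM]] := maxgroupp maxM.
exists (y *: M); first by apply: sum_free_lcoset; rewrite // inE yM yG.
by rewrite card_lcoset -(p_maximal_index pG maxM) mulnC Lagrange.
Qed.

Theorem lemma1 (n : nat) (gT : finGroupType) (G : {group gT}) (S : {set gT}) (x : gT) :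
  3.-abelem G -> #|G| = (3 ^ n)%N ->
  sum_free G S -> x \in S ->
  [/\ (* (i) *)
      [/\ [disjoint S & x^-1 *: S], [disjoint S & x *: S]
        & [disjoint x^-1 *: S & x *: S]],
      (* (ii) *)
      [/\ [disjoint S & S * S^-1], [disjoint S & S^-1]
        & [disjoint S * S^-1 & S^-1]]
    & max_sum_free G S ->
      [/\ (* (iii) *) S :|: x^-1 *: S :|: x *: S = G,
          #|S| = (#|G| %/ 3)%N
        & (* (iv) *) S :|: S * S^-1 :|: S^-1 = G]].
Proof.
move=> abG _ sfS xS.
have expG3 : exponent G %| 3 by move: abG; rewrite abelemE // => /andP[].
split.
- split.
  + exact: (sum_free_disjoint_lcosetV sfS xS).
  + exact: (sum_free_disjoint_lcoset sfS xS).
  + exact: (sum_free_disjoint_lcosetV_lcoset sfS expG3 xS).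
- split.
  + exact: (sum_free_disjoint_divs sfS).
  + exact: (sum_free_disjoint_invs sfS expG3).
  + exact: (sum_free_disjoint_divs_invs sfS).
case=> _ maxS.
have [T sfT cardT] :=
  exists_sum_free_pgroup (abelem_pgroup abG) (sum_free_ntrivg sfS).
have cardS : (3 * #|S|)%N = #|G|.
  apply/eqP; rewrite eqn_leq (card_sum_free_exponent3 sfS expG3).
  by rewrite -cardT leq_mul2l maxS.
split.
- by rewrite (sum_free_translates_cover sfS expG3 xS) ?cardS.
- by rewrite -cardS mulKn.
- by rewrite (sum_free_divs_invs_cover sfS expG3) ?cardS.
Qed.
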